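(* Let $p \ge 1$ and let $\mathcal{D}=\{(x_i,y_i) \mid i=1,\dots,m,\ x_i\in\mathbb{R}^d,\ y_i\in\{-1,1\}\}$ be a finite labeled dataset with $x_i \neq x_j$ whenever $y_i \neq y_j$. Let $c>0$ be a scalar such that for all $i,j$, $y_i \neq y_j$ implies $\|x_i - x_j\|_p > c$. Then there exists a function $f:\mathbb{R}^d \to \mathbb{R}$ which is $\frac{2}{c}$-Lipschitz continuous (with respect to $\|\cdot\|_p$ on $\mathbb{R}^d$ and the absolute value on $\mathbb{R}$) such that for every $i$ and every $\delta\in\mathbb{R}^d$ with $\|\delta\|_p < \frac{c}{2}$, we have $\mathrm{sign}(f(x_i+\delta)) = y_i$.
   Context: A function $f$ is $k$-Lipschitz continuous if $|f(x_1)-f(x_2)| \le k\,\|x_1-x_2\|_p$ for all $x_1,x_2$ in its domain. $\|\cdot\|_p$ denotes the usual $L_p$ (Minkowski) norm on $\mathbb{R}^d$. *)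

From HB Require Import structures.
From mathcomp Require Import all_boot all_order all_algebra.
From mathcomp Require Import all_classical all_reals.
From mathcomp Require Import exp.
Set Implicit Arguments. Unset Strict Implicit. Unset Printing Implicit Defensive.
Import Order.TTheory GRing.Theory Num.Theory.
Local Open Scope ring_scope.

Definition pnorm (R : realType) (d : nat) (p : R) (x : 'rV[R]_d) : R :=
  (\sum_(i < d) `|x ord0 i| `^ p) `^ p^-1.

Definition lipschitz_p (R : realType) (d : nat) (p k : R) (f : 'rV[R]_d -> R) : Prop :=
  forall x1 x2 : 'rV[R]_d, `|f x1 - f x2| <= k * pnorm p (x1 - x2).

(* Let D_s(z) be the p-distance from z to the points labelled s, capped at c/2;
   it is 1-Lipschitz as a minimum of 1-Lipschitz functions (Minkowski).  Take
   f = (D_{-1} - D_1) / c.  Within c/2 of a point x_i of label s, the distance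
   to x_i itself is below c/2, whereas every point of the other label is more
   than c/2 away because of the separation c; hence D_s < c/2 = D_{-s}, and
   the sign of f is s. *)
From HB Require Import structures.
From mathcomp Require Import all_boot all_order all_algebra.
From mathcomp Require Import all_classical all_reals.
From mathcomp Require Import all_analysis.
From mathcomp Require Import ring lra.
Import Order.TTheory GRing.Theory Num.Theory.
Set Implicit Arguments. Unset Strict Implicit.
Local Open Scope ring_scope.

Section FiniteMinkowski.
Variable R : realType.

(* Finite sums are read as L^p norms for the counting measure on nat, so as to
   reuse the library's Minkowski inequality. *)
Definition ord_ext0 n (a : 'I_n -> R) (k : nat) : R := oapp a 0 (insub k).

Lemma Lnorm_counting_ord_ext0 n (a : 'I_n -> R) (p : R) : 0 < p ->
  ('N[counting]_p%:E[EFin \o ord_ext0 a] = ((\sum_i `|a i| `^ p) `^ p^-1)%:E)%E.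
Proof.
move=> p0; rewrite Lnorm_counting //.
rewrite (nneseries_split 0 n); last by move=> k; rewrite poweR_ge0.
rewrite add0n eseries0 ?adde0; last first.
  move=> k nk _ /=; rewrite /ord_ext0 insubF ?normr0 ?powR0 ?gt_eqF //=.
  by rewrite ltnNge nk.
rewrite big_mkord.
under eq_bigr => i _ do rewrite /= /ord_ext0 valK /=.
by rewrite sumEFin poweR_EFin.
Qed.

Lemma minkowski_ord n (p : R) (a b : 'I_n -> R) : 1 <= p ->
  (\sum_i `|a i + b i| `^ p) `^ p^-1 <=
  (\sum_i `|a i| `^ p) `^ p^-1 + (\sum_i `|b i| `^ p) `^ p^-1.
Proof.
move=> p1; have p0 : 0 < p by apply: lt_le_trans p1.
have := @minkowski_EFin _ _ R counting (ord_ext0 a) (ord_ext0 b) p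
  ltac:(by []) ltac:(by []) p1.
have -> : (ord_ext0 a \+ ord_ext0 b)%R = ord_ext0 (fun i => a i + b i).
  by apply: funext => k; rewrite /ord_ext0 /=; case: insub => [i|] /=; rewrite ?addr0.
by rewrite !Lnorm_counting_ord_ext0 // -EFinD lee_fin.
Qed.

End FiniteMinkowski.

Lemma ler_normB_min (R : realDomainType) (a b a' b' e : R) :
  `|a - a'| <= e -> `|b - b'| <= e -> `|Num.min a b - Num.min a' b'| <= e.
Proof.
rewrite !ler_norml => /andP[h1 h2] /andP[h3 h4].
case: (leP a b) => hab; case: (leP a' b') => hab';
  rewrite ?(min_l hab) ?(min_r (ltW hab)) ?(min_l hab') ?(min_r (ltW hab'));
  apply/andP; split; lra.
Qed.

Section PNorm.
Variables (R : realType) (d : nat) (p : R).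

Lemma pnorm_ge0 (u : 'rV[R]_d) : 0 <= pnorm p u.
Proof. exact: powR_ge0. Qed.

Lemma pnormN (u : 'rV[R]_d) : pnorm p (- u) = pnorm p u.
Proof. by rewrite /pnorm; under eq_bigr => i _ do rewrite mxE normrN. Qed.

Lemma lipschitz_pB (k l : R) (f g : 'rV[R]_d -> R) :
  lipschitz_p p k f -> lipschitz_p p l g ->
  lipschitz_p p (k + l) (fun z => f z - g z).
Proof.
move=> hf hg z1 z2; rewrite mulrDl.
have -> : f z1 - g z1 - (f z2 - g z2) = (f z1 - f z2) - (g z1 - g z2) by ring.
by apply: le_trans (ler_normB _ _) _; apply: lerD.
Qed.

Lemma lipschitz_p_divr (k c : R) (f : 'rV[R]_d -> R) : 0 < c ->
  lipschitz_p p k f -> lipschitz_p p (k / c) (fun z => f z / c).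
Proof.
move=> c0 hf z1 z2; rewrite -mulrBl normrM [`|c^-1|]gtr0_norm ?invr_gt0 //.
by rewrite mulrAC ler_pM2r ?invr_gt0.
Qed.

Hypothesis p_ge1 : 1 <= p.

Lemma pnormD (u v : 'rV[R]_d) : pnorm p (u + v) <= pnorm p u + pnorm p v.
Proof.
rewrite /pnorm; under eq_bigr => i _ do rewrite mxE.
exact: minkowski_ord.
Qed.

Lemma lipschitz_p_dist (w : 'rV[R]_d) :
  lipschitz_p p 1 (fun z => pnorm p (z - w)).
Proof.
move=> z1 z2; rewrite mul1r.
have := pnormD (z1 - z2) (z2 - w); have := pnormD (z2 - z1) (z1 - w).
rewrite !addrA !subrK -[z2 - z1]opprB pnormN ler_norml.
move: (pnorm p (z1 - w)) (pnorm p (z2 - w)) (pnorm p (z1 - z2)) => A B C h2 h1.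
by apply/andP; split; lra.
Qed.

Lemma pnorm_shift_ge (u v delta : 'rV[R]_d) :
  pnorm p (u - v) - pnorm p delta <= pnorm p (u + delta - v).
Proof.
have := lipschitz_p_dist v (u + delta) u; rewrite mul1r [u + delta - u]addrC addKr.
by rewrite ler_distl => /andP[].
Qed.

End PNorm.

Section CappedDistance.
Variables (R : realType) (d m : nat) (p r : R).
Variables (a : 'I_m -> 'rV[R]_d) (P : pred 'I_m).

Definition capped_dist (z : 'rV[R]_d) : R :=
  \big[Order.min/r]_(j | P j) pnorm p (z - a j).

Lemma capped_dist_le z i : P i -> capped_dist z <= pnorm p (z - a i).
Proof. by move=> Pi; apply: bigmin_le_cond. Qed.

Lemma capped_dist_cap z :
  (forall j, P j -> r <= pnorm p (z - a j)) -> capped_dist z = r.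
Proof. by move=> far; apply: bigmin_eq_id. Qed.

Lemma lipschitz_p_capped_dist : 1 <= p -> lipschitz_p p 1 capped_dist.
Proof.
move=> p_ge1 z1 z2; rewrite mul1r.
apply: (big_ind2 (fun u v => `|u - v| <= pnorm p (z1 - z2))).
- by rewrite subrr normr0 pnorm_ge0.
- by move=> *; apply: ler_normB_min.
- by move=> j _; rewrite -[pnorm p (z1 - z2)]mul1r; apply: lipschitz_p_dist.
Qed.

End CappedDistance.

Section MarginClassifier.
Variables (R : realType) (d m : nat) (p c : R).
Variables (x : 'I_m -> 'rV[R]_d) (y : 'I_m -> R).
Hypotheses (p_ge1 : 1 <= p) (c_gt0 : 0 < c).
Hypothesis separated : forall i j, y i != y j -> pnorm p (x i - x j) > c.

Definition label_dist (s : R) : 'rV[R]_d -> R :=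
  capped_dist p (c / 2) x (fun j => y j == s).

Definition margin_classifier (z : 'rV[R]_d) : R :=
  (label_dist (-1) z - label_dist 1 z) / c.

Lemma lipschitz_p_margin_classifier : lipschitz_p p (2 / c) margin_classifier.
Proof.
apply: lipschitz_p_divr => //; rewrite -[2]/(1 + 1).
by apply: lipschitz_pB; apply: lipschitz_p_capped_dist.
Qed.

Variables (i : 'I_m) (delta : 'rV[R]_d).
Hypothesis small_delta : pnorm p delta < c / 2.

Lemma label_dist_own : label_dist (y i) (x i + delta) < c / 2.
Proof.
apply: le_lt_trans (capped_dist_le _ _ _ _ _) _; first exact: eqxx.
by rewrite [x i + delta - x i]addrC addKr.
Qed.

Lemma label_dist_other s : y i != s -> label_dist s (x i + delta) = c / 2.
Proof.
move=> yis; apply: capped_dist_cap => j /eqP yjs.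
have sep : c < pnorm p (x i - x j) by apply: separated; rewrite yjs.
have := pnorm_shift_ge p_ge1 (x i) (x j) delta; move: sep small_delta.
move: (pnorm p (x i - x j)) (pnorm p delta) (pnorm p (x i + delta - x j)).
by move=> A B C; lra.
Qed.

Lemma sg_margin_classifier :
  y i = 1 \/ y i = -1 -> Num.sg (margin_classifier (x i + delta)) = y i.
Proof.
have close := label_dist_own; rewrite /margin_classifier.
case=> yi; rewrite yi in close *.
- rewrite gtr0_sg // divr_gt0 // subr_gt0 (label_dist_other (s := -1)) //.
  by rewrite yi gt_eqF // ltrN10.
- rewrite ltr0_sg // pmulr_llt0 ?invr_gt0 // subr_lt0.
  by rewrite (label_dist_other (s := 1)) // yi lt_eqF // ltrN10.
Qed.

End MarginClassifier.

Theorem proposition1 (R : realType) (d m : nat) (p c : R)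
  (x : 'I_m -> 'rV[R]_d) (y : 'I_m -> R) :
  1 <= p ->
  (forall i, y i = 1 \/ y i = -1) ->
  (forall i j, y i != y j -> x i != x j) ->
  0 < c ->
  (forall i j, y i != y j -> pnorm p (x i - x j) > c) ->
  exists f : 'rV[R]_d -> R,
    lipschitz_p p (2 / c) f /\
    (forall (i : 'I_m) (delta : 'rV[R]_d),
        pnorm p delta < c / 2 -> Num.sg (f (x i + delta)) = y i).
Proof.
(* distinctness of differently labelled points follows from their separation *)
move=> p_ge1 labels _ c_gt0 separated.
exists (margin_classifier p c x y); split.
  exact: lipschitz_p_margin_classifier.
by move=> i delta small; apply: sg_margin_classifier.
Qed.
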